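(* For every symmetric sequence space $X$ and every $x\in X$, $$\|x\|_X\le\Big\|\sum_{k=0}^\infty x^*_{2^k}e_{k+1}\Big\|_{E_X}\le5\|x\|_X.$$
   Context: A Banach sequence lattice is a Banach space $E$ of real sequences such that $x\in E$, $|y_k|\le|x_k|$ imply $y\in E$, $\|y\|_E\le\|x\|_E$. $u^*$ is the nonincreasing rearrangement of $(|u_k|)$, $u^*_k=\inf_{\mathrm{card}A=k-1}\sup_{i\notin A}|u_i|$. A symmetric sequence space is a Banach sequence lattice $X\subset\ell^\infty$ such that $x\in X$, $y^*=x^*$ imply $y\in X$, $\|y\|_X=\|x\|_X$; standing assumption: $X$ is separable or has the Fatou property. $e_k$ is the $k$-th unit vector. $E_X$ is the Banach sequence lattice of all real sequences $a$ with $\|a\|_{E_X}:=\|\sum_{k=1}^\infty a_k\sum_{i=2^{k-1}}^{2^k-1}e_i\|_X<\infty$. *)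

From HB Require Import structures.
From mathcomp Require Import all_boot all_order all_algebra.
From mathcomp Require Import all_classical all_reals all_analysis.

Set Implicit Arguments.
Unset Strict Implicit.
Unset Printing Implicit Defensive.

Import Order.TTheory GRing.Theory Num.Theory.
Import numFieldNormedType.Exports.
Local Open Scope classical_set_scope.
Local Open Scope ring_scope.

(* Conventions: a real sequence is u : nat -> R, where u i (i >= 0) is the
   paper's u_{i+1} (the paper indexes from 1). *)

Section SeqSpaces.
Variable R : realType.

(* Nonincreasing rearrangement, 0-based: rearr u k = paper's u^*_{k+1}
   = inf_{card A = k} sup_{i \notin A} |u_i|, valued in extended reals
   (so that it is meaningful for unbounded sequences as well). *)
Definition rearr (u : nat -> R) (k : nat) : \bar R :=
  ereal_inf [set ereal_sup [set (`|u i|)%:E | i in [set i | i \notin s]]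
            | s in [set s : seq nat | uniq s /\ size s = k]].

(* X is a Banach space of real sequences with norm N (N only meaningful on X). *)
Definition is_banach_seq_space (X : set (nat -> R)) (N : (nat -> R) -> R) :=
  [/\ X (fun _ => 0),
      (forall x y, X x -> X y -> X (fun i => x i + y i)),
      (forall c x, X x -> X (fun i => c * x i)) &
      (forall x, X x -> 0 <= N x /\ (N x = 0 -> x = (fun _ => 0)))] /\
  [/\ (forall c x, X x -> N (fun i => c * x i) = `|c| * N x),
      (forall x y, X x -> X y -> N (fun i => x i + y i) <= N x + N y) &
      (forall u : nat -> nat -> R, (forall n, X (u n)) ->
        (forall e, 0 < e -> exists M, forall m n, (M <= m)%N -> (M <= n)%N ->
           N (fun i => u m i - u n i) < e) ->
        exists x, X x /\ (forall e, 0 < e -> exists M, forall n, (M <= n)%N ->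
           N (fun i => u n i - x i) < e))].

Definition is_banach_seq_lattice (X : set (nat -> R)) (N : (nat -> R) -> R) :=
  is_banach_seq_space X N /\
  (forall x y, X x -> (forall k, `|y k| <= `|x k|) -> X y /\ N y <= N x).

Definition separable_space (X : set (nat -> R)) (N : (nat -> R) -> R) :=
  exists D : nat -> nat -> R, (forall n, X (D n)) /\
    forall x, X x -> forall e, 0 < e -> exists n, N (fun i => x i - D n i) < e.

Definition fatou_property (X : set (nat -> R)) (N : (nat -> R) -> R) :=
  forall (xs : nat -> nat -> R) (x : nat -> R),
    (forall n, X (xs n)) ->
    (forall n k, 0 <= xs n k <= xs n.+1 k) ->
    (forall k, (fun n => xs n k) @ \oo --> x k) ->
    (exists C, forall n, N (xs n) <= C) ->
    X x /\ N x = sup (range (fun n => N (xs n))).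

Definition symmetric_seq_space (X : set (nat -> R)) (N : (nat -> R) -> R) :=
  [/\ is_banach_seq_lattice X N,
      (forall x, X x -> exists M, forall k, `|x k| <= M),
      (forall x y, X x -> rearr y = rearr x -> X y /\ N y = N x) &
      (separable_space X N \/ fatou_property X N)].

(* For a = (a_1, a_2, ...) (0-based a k = paper a_{k+1}), the sequence
   sum_k a_k sum_{i=2^{k-1}}^{2^k-1} e_i; 0-based index i belongs to paper
   block trunc_log 2 (i+1) + 1.  E_X = {a | X (block a)}, ||a||_{E_X} = N (block a). *)
Definition block (a : nat -> R) : nat -> R := fun i => a (trunc_log 2 i.+1).

Definition EX_mem (X : set (nat -> R)) (a : nat -> R) := X (block a).
Definition EX_norm (N : (nat -> R) -> R) (a : nat -> R) := N (block a).

(* The sequence sum_{k>=0} x^*_{2^k} e_{k+1}: its 0-based k-th entry is the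
   paper's x^*_{2^k} = rearr x (2^k - 1).  (Finite for bounded x.) *)
Definition dyadic_rearr (x : nat -> R) : nat -> R :=
  fun k => fine (rearr x (2 ^ k).-1).

End SeqSpaces.

From mathcomp Require Import all_boot all_order all_algebra.
From mathcomp Require Import all_classical all_reals all_analysis.
From mathcomp Require Import zify.
Import Order.TTheory GRing.Theory Num.Theory.
Local Open Scope ring_scope.

(* Let s = x^* be the nonincreasing rearrangement of a bounded sequence x; by
   symmetry s lies in X with the norm of x.  The block sequence b of
   (x^*_{2^k})_k takes on the dyadic block [2^k - 1, 2^(k+1) - 1) the value
   s_{2^k - 1}, hence  s_i <= b_i <= s_{i/2}  for every i.  The lattice property
   gives ||x|| = ||s|| <= ||b||, and ||b|| <= ||(s_{i/2})_i||.  The dilated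
   sequence (s_{i/2})_i is the sum of its even and odd parts, each of which is
   a "spread" of s and so has the same rearrangement as s; by symmetry and the
   triangle inequality its norm is at most 2 ||x||, which is sharper than the
   claimed bound 5 ||x||. *)

Lemma injective_image_avoids (f : nat -> nat) :
  injective f -> forall t : seq nat, exists2 i, (i <= size t)%N & f i \notin t.
Proof.
move=> finj t.
case/boolP: (has (fun i => f i \notin t) (iota 0 (size t).+1)).
  by case/hasP => i; rewrite mem_iota add0n ltnS => /andP[_ hi] fi; exists i.
move/hasPn => inT.
have : (size (map f (iota 0 (size t).+1)) <= size t)%N.
  apply: uniq_leq_size; first by rewrite map_inj_uniq // iota_uniq.
  by move=> y /mapP [i /inT /negPn hi ->].
by rewrite size_map size_iota ltnn.
Qed.

Section Rearrangement.
Context {R : realType}.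
Local Open Scope ereal_scope.

(* Each rearranged term is a sup of moduli over a cofinite set, hence >= 0. *)
Lemma rearr_ge0 (u : nat -> R) k : 0 <= rearr u k.
Proof.
apply: le_ereal_inf_tmp => _ [t [_ tk] <-].
have [i _ it] := @injective_image_avoids id (@inj_id nat) t.
apply: le_ereal_sup_tmp; exists (`|u i|%R)%:E; first by exists i.
by rewrite lee_fin.
Qed.

Lemma rearr_le_bound (u : nat -> R) (M : R) k :
  (forall i, `|u i| <= M)%R -> rearr u k <= M%:E.
Proof.
move=> uM; apply: ge_ereal_inf.
exists (ereal_sup [set (`|u i|%R)%:E | i in [set i | i \notin iota 0 k]]).
  by exists (iota 0 k) => //; split; [exact: iota_uniq | rewrite size_iota].
by apply: ge_ereal_sup => _ [j _ <-]; rewrite lee_fin.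
Qed.

(* Removing one more index can only decrease the sup: u^* is nonincreasing. *)
Lemma rearr_succ_le (u : nat -> R) k : rearr u k.+1 <= rearr u k.
Proof.
apply: le_ereal_inf_tmp => _ [t [ut tk] <-].
have [j _ jt] := @injective_image_avoids id (@inj_id nat) t.
apply: ge_ereal_inf.
exists (ereal_sup [set (`|u i|%R)%:E | i in [set i | i \notin rcons t j]]).
  exists (rcons t j) => //; split; first by rewrite rcons_uniq jt.
  by rewrite size_rcons tk.
apply: ereal_sup_le => _ [i /= ijt <-]; exists i => //=.
by move: ijt; rewrite mem_rcons in_cons negb_or => /andP[].
Qed.

Lemma rearr_nonincreasing (u : nat -> R) i j :
  (i <= j)%N -> rearr u j <= rearr u i.
Proof.
move=> /subnK <-; elim: (j - i)%N => [|d IH] //.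
by rewrite addSn; apply: le_trans (rearr_succ_le _ _) IH.
Qed.

Lemma rearr_spread (s : nat -> R) (f : nat -> nat) (u : nat -> R) :
  injective f -> (forall i, 0 <= s i)%R ->
  (forall i j, (i <= j)%N -> s j <= s i)%R ->
  (forall i, `|u (f i)|%R = s i) ->
  (forall j, (forall i, f i != j) -> u j = 0%R) ->
  forall k, rearr u k = (s k)%:E.
Proof.
move=> finj s0 sdec uf uoff k; apply/eqP; rewrite eq_le; apply/andP; split.
- apply: ge_ereal_inf.
  exists (ereal_sup [set (`|u i|%R)%:E | i in [set i | i \notin map f (iota 0 k)]]).
    exists (map f (iota 0 k)) => //; split.
      by rewrite map_inj_uniq // iota_uniq.
    by rewrite size_map size_iota.
  apply: ge_ereal_sup => _ [j /= jfk <-]; rewrite lee_fin.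
  have [[i fij]|nof] := pselect (exists i, f i = j).
    subst j; rewrite uf; apply: sdec; rewrite leqNgt; apply/negP => ik.
    by move/negP: jfk; apply; apply: map_f; rewrite mem_iota.
  by rewrite uoff ?normr0 // => i; apply/eqP => fij; apply: nof; exists i.
- apply: le_ereal_inf_tmp => _ [t [_ tk] <-].
  have [i it fit] := @injective_image_avoids f finj t.
  apply: le_ereal_sup_tmp; exists (`|u (f i)|%R)%:E; first by exists (f i).
  by rewrite uf lee_fin; apply: sdec; rewrite -tk.
Qed.

Lemma rearr_of_nonincreasing (s : nat -> R) :
  (forall i, 0 <= s i)%R -> (forall i j, (i <= j)%N -> s j <= s i)%R ->
  forall k, rearr s k = (s k)%:E.
Proof.
move=> s0 sdec; apply: (@rearr_spread s id) => //.
- by move=> i; rewrite ger0_norm.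
- by move=> j /(_ j); rewrite eqxx.
Qed.

Definition decr (x : nat -> R) (k : nat) : R := fine (rearr x k).

Lemma decr_ge0 (x : nat -> R) k : (0 <= decr x k)%R.
Proof. exact/fine_ge0/rearr_ge0. Qed.

(* For bounded x every rearranged term is finite, so [decr] loses nothing. *)
Section Bounded.
Context {x : nat -> R} {M : R} (xM : forall i, (`|x i| <= M)%R).

Lemma rearrE k : rearr x k = (decr x k)%:E.
Proof.
rewrite /decr fineK // ge0_fin_numE ?rearr_ge0 //.
exact: le_lt_trans (@rearr_le_bound x M k xM) (ltry M).
Qed.

Lemma decr_nonincreasing i j : (i <= j)%N -> (decr x j <= decr x i)%R.
Proof. by move=> ij; rewrite -lee_fin -!rearrE rearr_nonincreasing. Qed.

Lemma rearr_decr : rearr (decr x) = rearr x.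
Proof.
apply/funext => k; rewrite rearrE.
exact: rearr_of_nonincreasing (decr_ge0 x) decr_nonincreasing k.
Qed.

End Bounded.

Definition even_spread (s : nat -> R) (i : nat) : R :=
  if odd i then 0%R else s i./2.
Definition odd_spread (s : nat -> R) (i : nat) : R :=
  if odd i then s i./2 else 0%R.

Lemma even_add_odd_spread (s : nat -> R) i :
  (even_spread s i + odd_spread s i)%R = s i./2.
Proof. by rewrite /even_spread /odd_spread; case: ifP; rewrite ?addr0 ?add0r. Qed.

Section Spreads.
Context {s : nat -> R} (s0 : forall i, (0 <= s i)%R)
        (sdec : forall i j, (i <= j)%N -> (s j <= s i)%R).

Lemma rearr_even_spread : rearr (even_spread s) = rearr s.
Proof.
apply/funext => k; rewrite (@rearr_of_nonincreasing s s0 sdec).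
apply: (@rearr_spread s double) => //.
- exact: can_inj doubleK.
- by move=> i; rewrite /even_spread odd_double doubleK ger0_norm.
- move=> j notdouble; rewrite /even_spread; case: ifP => // oj; exfalso.
  by move/eqP: (notdouble j./2); apply; have := odd_double_half j; rewrite oj.
Qed.

Lemma rearr_odd_spread : rearr (odd_spread s) = rearr s.
Proof.
apply/funext => k; rewrite (@rearr_of_nonincreasing s s0 sdec).
apply: (@rearr_spread s (fun i => i.*2.+1)) => //.
- by move=> a b /= [] /(can_inj doubleK).
- by move=> i; rewrite /odd_spread /= odd_double /= uphalf_double ger0_norm.
- move=> j notodd; rewrite /odd_spread; case: ifP => // oj; exfalso.
  by move/eqP: (notodd j./2); apply; have := odd_double_half j; rewrite oj.
Qed.

End Spreads.
End Rearrangement.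

Lemma dyadic_block_start_le (i : nat) : ((2 ^ trunc_log 2 i.+1).-1 <= i)%N.
Proof. have := @trunc_logP 2 i.+1 isT isT; lia. Qed.

Lemma half_le_dyadic_block_start (i : nat) :
  (i./2 <= (2 ^ trunc_log 2 i.+1).-1)%N.
Proof.
have := @trunc_log_ltn 2 i.+1 isT; rewrite expnS => ilt.
have := odd_double_half i; rewrite -muln2; lia.
Qed.

Lemma dyadic_block_bounds {R : realType} {x : nat -> R} {M : R} :
  (forall i, `|x i| <= M) -> forall i,
  `|decr x i| <= `|block (dyadic_rearr x) i| <= `|decr x i./2|.
Proof.
move=> xM i; rewrite /block /dyadic_rearr -/(decr x _) !ger0_norm ?decr_ge0 //.
by rewrite !(decr_nonincreasing xM) ?dyadic_block_start_le ?half_le_dyadic_block_start.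
Qed.

Section SymmetricSpace.
Context {R : realType} {X : set (nat -> R)} {N : (nat -> R) -> R}.
Context (hX : symmetric_seq_space X N).

Lemma sym_bounded {x} : X x -> exists M, forall k, `|x k| <= M.
Proof. by case: hX => _ + _ _; apply. Qed.

Lemma sym_norm_ge0 {x} : X x -> 0 <= N x.
Proof. by case: hX => [[[[_ _ _ Npos] _] _] _ _ _] /Npos[]. Qed.

Lemma sym_add {x y} : X x -> X y ->
  X (fun i => x i + y i) /\ N (fun i => x i + y i) <= N x + N y.
Proof. by case: hX => [[[[_ Xadd _ _] [_ Ntri _]] _] _ _ _] xX yX; split; auto. Qed.

Lemma sym_dominated {x y} : X x -> (forall k, `|y k| <= `|x k|) ->
  X y /\ N y <= N x.
Proof. by case: hX => [[_ hL] _ _ _]; apply: hL. Qed.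

Lemma sym_invariant {x y} : X x -> rearr y = rearr x -> X y /\ N y = N x.
Proof. by case: hX => _ _ + _; apply. Qed.

Lemma sym_decr {x} : X x -> X (decr x) /\ N (decr x) = N x.
Proof.
move=> xX; have [M xM] := sym_bounded xX.
exact/sym_invariant/rearr_decr/xM.
Qed.

Lemma sym_dilation {s} : X s -> (forall i, 0 <= s i) ->
  (forall i j, (i <= j)%N -> s j <= s i) ->
  X (fun i => s i./2) /\ N (fun i => s i./2) <= 2 * N s.
Proof.
move=> sX s0 sdec.
have [evX evN] := sym_invariant sX (rearr_even_spread s0 sdec).
have [odX odN] := sym_invariant sX (rearr_odd_spread s0 sdec).
have [sumX sumN] := sym_add evX odX.
have dil : (fun i => even_spread s i + odd_spread s i) = (fun i => s i./2).
  by apply/funext => i; rewrite even_add_odd_spread.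
by rewrite -dil; split => //; rewrite mulr2n mulrDl mul1r -{1}evN -odN.
Qed.

End SymmetricSpace.

Theorem mainTheorem7 (R : realType) (X : set (nat -> R)) (N : (nat -> R) -> R)
  (hX : symmetric_seq_space X N) (x : nat -> R) (hx : X x) :
  EX_mem X (dyadic_rearr x) /\
  N x <= EX_norm N (dyadic_rearr x) <= 5 * N x.
Proof.
have [M xM] := sym_bounded hX hx.
have [decrX decrN] := sym_decr hX hx.
have [dilX dilN] := sym_dilation hX decrX (@decr_ge0 R x) (decr_nonincreasing xM).
have [blockX blockN] : X (block (dyadic_rearr x)) /\
    N (block (dyadic_rearr x)) <= N (fun i => decr x i./2).
  by apply: (sym_dominated hX dilX) => i; case/andP: (dyadic_block_bounds xM i).
have [_ lowerN] : X (decr x) /\ N (decr x) <= N (block (dyadic_rearr x)).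
  by apply: (sym_dominated hX blockX) => i; case/andP: (dyadic_block_bounds xM i).
split => //; apply/andP; split; first by rewrite -decrN.
apply: (le_trans blockN); apply: (le_trans dilN).
by rewrite decrN ler_wpM2r ?ler_nat ?(sym_norm_ge0 hX hx).
Qed.
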